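(* There exists a constant $K$ such that $|\dot\lambda_{i,k}(\theta_0)|\le K/i$ for all $i\ge1$ and all $1\le k\le p+q+1$.
   Context: $d_0\in(-1/2,1/2)$; $a(z)=1-\sum_{i=1}^pa_iz^i$, $b(z)=1-\sum_{i=1}^qb_iz^i$ have all roots outside the unit disk and no common factors; $\theta_0=(a_1,\dots,a_p,b_1,\dots,b_q,d_0)$. For $\theta=(\theta_1,\dots,\theta_{p+q},d)$ near $\theta_0$, $a_\theta(z)=1-\sum_{i=1}^p\theta_iz^i$, $b_\theta(z)=1-\sum_{j=1}^q\theta_{p+j}z^j$, and $\dot\lambda_{i,k}(\theta)$ is the $i$-th coefficient of the power series $\frac{\partial}{\partial\theta_k}\big(b_\theta^{-1}(z)a_\theta(z)(1-z)^{d-d_0}a_{\theta_0}^{-1}(z)b_{\theta_0}(z)\big)$ (with $\theta_{p+q+1}=d$). *)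

From Stdlib Require Import Reals Arith.
From Coquelicot Require Import Coquelicot.
Open Scope R_scope.

Fixpoint csum (c : nat -> R) (m : nat) (z : C) : C :=
  match m with
  | O => RtoC 0
  | S m' => Cplus (csum c m' z) (Cmult (RtoC (c (S m'))) (Cpow z (S m')))
  end.

Definition lagpoly (c : nat -> R) (m : nat) (z : C) : C :=
  Cminus (RtoC 1) (csum c m z).

Definition roots_outside_unit_disk (c : nat -> R) (m : nat) : Prop :=
  forall z : C, Cmod z <= 1 -> lagpoly c m z <> RtoC 0.

Definition no_common_factor (c : nat -> R) (m : nat) (e : nat -> R) (l : nat) : Prop :=
  forall z : C, ~ (lagpoly c m z = RtoC 0 /\ lagpoly e l z = RtoC 0).

Definition poly_coef (c : nat -> R) (m : nat) (n : nat) : R :=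
  match n with
  | O => 1
  | S _ => if Nat.leb n m then - c n else 0
  end.

(* truncated table of coefficients of (1 - sum_{i=1}^m c_i z^i)^{-1}:
   e_0 = 1, e_n = sum_{j=1}^{min(n,m)} c_j e_{n-j}. *)
Fixpoint inv_table (c : nat -> R) (m : nat) (n : nat) : nat -> R :=
  match n with
  | O => fun k => if Nat.eqb k 0 then 1 else 0
  | S n' => fun k =>
      if Nat.eqb k (S n') then
        sum_f_R0 (fun j => if Nat.leb (S j) m
                           then c (S j) * inv_table c m n' (n' - j)%nat else 0) n'
      else inv_table c m n' k
  end.

Definition inv_coef (c : nat -> R) (m : nat) (n : nat) : R := inv_table c m n n.

(* n-th coefficient of (1 - z)^delta = sum_n binom(delta, n) (-z)^n *)
Fixpoint frac_coef (delta : R) (n : nat) : R :=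
  match n with
  | O => 1
  | S n' => frac_coef delta n' * (INR n' - delta) / INR (S n')
  end.

Definition cauchy (u v : nat -> R) (n : nat) : R :=
  sum_f_R0 (fun j => u j * v (n - j)%nat) n.

(** theta : nat -> R, coordinates theta_1 .. theta_{p+q+1} (theta_{p+q+1} = d). *)
Definition theta0 (p q : nat) (a b : nat -> R) (d0 : R) : nat -> R :=
  fun i => if Nat.leb i p then a i
           else if Nat.leb i (p + q) then b (i - p)%nat else d0.

(** lambda_i(theta): i-th coefficient of
    b_theta^{-1}(z) a_theta(z) (1-z)^{d-d0} a_{theta0}^{-1}(z) b_{theta0}(z). *)
Definition lambda (p q : nat) (a b : nat -> R) (d0 : R) (theta : nat -> R) (i : nat) : R :=
  cauchy
    (cauchy
      (cauchy
        (cauchy (inv_coef (fun j => theta (p + j)%nat) q) (poly_coef theta p))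
        (frac_coef (theta (p + q + 1)%nat - d0)))
      (inv_coef a p))
    (poly_coef b q) i.

Definition upd (theta : nat -> R) (k : nat) (t : R) : nat -> R :=
  fun i => if Nat.eqb i k then t else theta i.

(* At theta0 the factor (1 - z)^(d - d0) is 1 and every other factor of the power series
   defining lambda has geometrically decaying coefficients: a polynomial trivially, and the
   inverse of a polynomial without roots in the closed unit disk because, by the fundamental
   theorem of algebra, it is a product of geometric series sum (z / r)^n with |r| > 1.
   Differentiating in theta_k, the product rule replaces one factor by its derivative. That
   derivative again decays geometrically, except for the derivative of (1 - z)^(d - d0) in d
   at d = d0, which is log (1 - z) with coefficients -1/n. Convolving a geometrically decaying
   sequence with an O(1/n) one stays O(1/n), because (n + 1) <= (j + 1) (n - j + 1); hence the
   i-th coefficient of the derivative is O(1/i), and finitely many directions k give a uniform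
   constant. *)

From Stdlib Require Import Reals Arith Lia Lra Classical.
From Coquelicot Require Import Coquelicot.
From mathcomp Require ssreflect ssrfun ssrbool eqtype ssrnat seq fintype bigop ssralg Rstruct complex.
Set Bullet Behavior "Strict Subproofs".
Open Scope R_scope.

Definition geo_decay (u : nat -> R) : Prop :=
  exists K rho, 0 <= rho < 1 /\ forall n, Rabs (u n) <= K * rho ^ n.

Definition inv_decay (u : nat -> R) : Prop :=
  exists K, forall n, (INR n + 1) * Rabs (u n) <= K.

Lemma sum_f_R0_ge_term (f : nat -> R) m n :
  (forall j, 0 <= f j) -> (n <= m)%nat -> f n <= sum_f_R0 f m.
Proof.
  intros Hf Hn; induction m as [|m IH].
  - replace n with 0%nat by lia; simpl; lra.
  - simpl. pose proof (Hf (S m)).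
    destruct (Nat.eq_dec n (S m)) as [->|Hne].
    + pose proof (cond_pos_sum f m Hf); lra.
    + assert (f n <= sum_f_R0 f m) by (apply IH; lia). lra.
Qed.

Lemma sum_f_R0_rev (f : nat -> R) n :
  sum_f_R0 f n = sum_f_R0 (fun j => f (n - j)%nat) n.
Proof.
  revert f; induction n as [|n IH]; intros f; [reflexivity|].
  simpl sum_f_R0 at 2. rewrite Nat.sub_diag, decomp_sum by lia. simpl Nat.pred.
  rewrite (IH (fun i => f (S i))), Rplus_comm. f_equal.
  apply sum_eq; intros i Hi. f_equal. destruct i; lia.
Qed.

Lemma cauchy_comm u v n : cauchy u v n = cauchy v u n.
Proof.
  unfold cauchy. rewrite sum_f_R0_rev. apply sum_eq; intros j Hj.
  rewrite Rmult_comm. do 2 f_equal. lia.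
Qed.

Lemma cauchy_abs_le u v n :
  Rabs (cauchy u v n) <= sum_f_R0 (fun j => Rabs (u j) * Rabs (v (n - j)%nat)) n.
Proof.
  eapply Rle_trans; [apply sum_f_R0_triangle|].
  apply sum_Rle; intros j _. rewrite Rabs_mult; lra.
Qed.

Lemma geo_sum_le_inv x n : 0 <= x < 1 -> sum_f_R0 (fun j => x ^ j) n <= / (1 - x).
Proof.
  intros Hx. pose proof (GP_finite x n) as G.
  assert (0 <= x ^ (n + 1)) by (apply pow_le; lra).
  apply (Rmult_le_reg_r (1 - x)); [lra|].
  rewrite Rinv_l by lra. lra.
Qed.

Lemma linear_pow_le_inv x n : 0 <= x < 1 -> (INR n + 1) * x ^ n <= / (1 - x).
Proof.
  intros Hx. apply Rle_trans with (sum_f_R0 (fun j => x ^ j) n); [|now apply geo_sum_le_inv].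
  rewrite <- S_INR, Rmult_comm, <- sum_cte. apply sum_Rle; intros j Hj.
  replace n with (j + (n - j))%nat at 1 by lia. rewrite pow_add.
  assert (x ^ (n - j) <= 1) by (rewrite <- (pow1 (n - j)); apply pow_incr; lra).
  assert (0 <= x ^ j) by (apply pow_le; lra). nra.
Qed.

(* A linear factor is absorbed by slightly enlarging the ratio: rho < (1 + rho) / 2. *)
Lemma linear_pow_dominated rho : 0 <= rho < 1 -> exists sigma K, 0 <= sigma < 1 /\ 0 <= K /\
  forall n, (INR n + 1) * rho ^ n <= K * sigma ^ n.
Proof.
  intros Hr. set (s := (1 + rho) / 2). set (x := rho / s).
  assert (Hs : 0 < s < 1) by (unfold s; lra).
  assert (Hx : 0 <= x < 1).
  { unfold x; split; [apply Rdiv_le_0_compat; lra|].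
    apply (Rmult_lt_reg_r s); [lra|]. unfold Rdiv; rewrite Rmult_assoc, Rinv_l by lra.
    unfold s; lra. }
  exists s, (/ (1 - x)). split; [lra|]. split; [left; apply Rinv_0_lt_compat; lra|].
  intros n. replace rho with (x * s) by (unfold x; field; lra).
  rewrite Rpow_mult_distr.
  assert (0 <= s ^ n) by (apply pow_le; lra).
  pose proof (linear_pow_le_inv x n Hx). nra.
Qed.

Lemma geo_decay_ext u v : (forall n, u n = v n) -> geo_decay v -> geo_decay u.
Proof. intros H [K [r [Hr Hb]]]. exists K, r. split; auto. intros n; rewrite H; auto. Qed.

Lemma geo_decay_nonneg u : geo_decay u ->
  exists K rho, 0 <= K /\ 0 <= rho < 1 /\ forall n, Rabs (u n) <= K * rho ^ n.
Proof.
  intros [K [r [Hr Hb]]]. exists K, r. repeat split; auto; try lra.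
  specialize (Hb 0%nat). simpl in Hb. pose proof (Rabs_pos (u 0%nat)). lra.
Qed.

Lemma geo_decay_bounded u : geo_decay u -> exists M, forall n, Rabs (u n) <= M.
Proof.
  intros Hu. destruct (geo_decay_nonneg u Hu) as [K [r [HK [Hr Hb]]]].
  exists K. intros n. apply Rle_trans with (K * r ^ n); auto.
  assert (r ^ n <= 1) by (rewrite <- (pow1 n); apply pow_incr; lra).
  assert (0 <= r ^ n) by (apply pow_le; lra). nra.
Qed.

Lemma geo_decay_linear_weight u : geo_decay u -> geo_decay (fun n => (INR n + 1) * u n).
Proof.
  intros Hu. destruct (geo_decay_nonneg u Hu) as [K [r [HK [Hr Hb]]]].
  destruct (linear_pow_dominated r Hr) as [s [L [Hs [HL HsL]]]].
  exists (K * L), s. split; auto. intros n.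
  pose proof (pos_INR n). specialize (Hb n). specialize (HsL n).
  rewrite Rabs_mult, (Rabs_right (INR n + 1)) by lra.
  apply Rle_trans with (K * ((INR n + 1) * r ^ n)); [nra|].
  rewrite Rmult_assoc. apply Rmult_le_compat_l; auto.
Qed.

Lemma geo_decay_inv_decay u : geo_decay u -> inv_decay u.
Proof.
  intros Hu. destruct (geo_decay_bounded _ (geo_decay_linear_weight u Hu)) as [M HM].
  exists M. intros n. specialize (HM n).
  rewrite Rabs_mult, (Rabs_right (INR n + 1)) in HM; auto.
  pose proof (pos_INR n). lra.
Qed.

Lemma geo_decay_abs_sum_bounded u : geo_decay u ->
  exists S, forall n, sum_f_R0 (fun j => Rabs (u j)) n <= S.
Proof.
  intros Hu. destruct (geo_decay_nonneg u Hu) as [K [r [HK [Hr Hb]]]].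
  exists (K * / (1 - r)). intros n.
  apply Rle_trans with (sum_f_R0 (fun j => r ^ j * K) n).
  { apply sum_Rle; intros j _. now rewrite Rmult_comm. }
  rewrite <- scal_sum. apply Rmult_le_compat_l; auto. now apply geo_sum_le_inv.
Qed.

Lemma geo_decay_opp u : geo_decay u -> geo_decay (fun n => - u n).
Proof. intros [K [r [Hr Hb]]]. exists K, r. split; auto. intros n; rewrite Rabs_Ropp; auto. Qed.

Lemma geo_decay_finite_support u m : (forall n, (m < n)%nat -> u n = 0) -> geo_decay u.
Proof.
  intros H. set (w := fun j => Rabs (u j) * 2 ^ j).
  assert (Hw : forall j, 0 <= w j).
  { intros j; apply Rmult_le_pos; [apply Rabs_pos|apply pow_le; lra]. }
  exists (sum_f_R0 w m), (/ 2). split; [lra|]. intros n.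
  assert (0 <= (/ 2) ^ n) by (apply pow_le; lra).
  destruct (le_lt_dec n m) as [Hn|Hn].
  - apply Rle_trans with (w n * (/ 2) ^ n).
    + unfold w. rewrite Rmult_assoc, <- Rpow_mult_distr, Rinv_r, pow1 by lra. lra.
    + apply Rmult_le_compat_r; auto. now apply sum_f_R0_ge_term.
  - rewrite H, Rabs_R0 by auto. apply Rmult_le_pos; auto. now apply cond_pos_sum.
Qed.

Lemma geo_decay_cauchy u v : geo_decay u -> geo_decay v -> geo_decay (cauchy u v).
Proof.
  intros Hu Hv. destruct (geo_decay_nonneg u Hu) as [K1 [r1 [HK1 [Hr1 H1]]]].
  destruct (geo_decay_nonneg v Hv) as [K2 [r2 [HK2 [Hr2 H2]]]].
  set (r := Rmax r1 r2).
  assert (Hr : 0 <= r < 1) by (unfold r, Rmax; destruct Rle_dec; lra).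
  destruct (linear_pow_dominated r Hr) as [s [K [Hs [HK Hb]]]].
  exists (K1 * K2 * K), s. split; auto. intros n.
  eapply Rle_trans; [apply cauchy_abs_le|].
  apply Rle_trans with (sum_f_R0 (fun _ => K1 * K2 * r ^ n) n).
  - apply sum_Rle; intros j Hj.
    specialize (H1 j); specialize (H2 (n - j)%nat).
    replace (r ^ n) with (r ^ j * r ^ (n - j)) by (rewrite <- pow_add; f_equal; lia).
    assert (r1 ^ j <= r ^ j) by (apply pow_incr; unfold r; split; [lra|apply Rmax_l]).
    assert (r2 ^ (n - j) <= r ^ (n - j)) by (apply pow_incr; unfold r; split; [lra|apply Rmax_r]).
    assert (K1 * r1 ^ j <= K1 * r ^ j) by (apply Rmult_le_compat_l; auto).
    assert (K2 * r2 ^ (n - j) <= K2 * r ^ (n - j)) by (apply Rmult_le_compat_l; auto).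
    pose proof (Rabs_pos (u j)); pose proof (Rabs_pos (v (n - j)%nat)).
    replace (K1 * K2 * (r ^ j * r ^ (n - j))) with ((K1 * r ^ j) * (K2 * r ^ (n - j))) by ring.
    apply Rmult_le_compat; lra.
  - rewrite sum_cte, S_INR. specialize (Hb n).
    assert (0 <= K1 * K2) by nra. nra.
Qed.

Lemma inv_decay_plus u v : inv_decay u -> inv_decay v -> inv_decay (fun n => u n + v n).
Proof.
  intros [K1 H1] [K2 H2]. exists (K1 + K2). intros n.
  pose proof (Rabs_triang (u n) (v n)). specialize (H1 n); specialize (H2 n).
  pose proof (pos_INR n). nra.
Qed.

Lemma linear_le_mul n j : (j <= n)%nat -> INR n + 1 <= (INR j + 1) * (INR (n - j) + 1).
Proof.
  intros Hj. rewrite minus_INR by auto. pose proof (pos_INR j).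
  assert (INR j <= INR n) by (apply le_INR; auto). nra.
Qed.

Lemma geo_inv_decay_cauchy u v : geo_decay u -> inv_decay v -> inv_decay (cauchy u v).
Proof.
  intros Hu [K Hv].
  destruct (geo_decay_abs_sum_bounded _ (geo_decay_linear_weight u Hu)) as [S HS].
  exists (S * K). intros n.
  assert (HK : 0 <= K).
  { specialize (Hv 0%nat). pose proof (Rabs_pos (v 0%nat)). simpl in Hv. lra. }
  apply Rle_trans with ((INR n + 1) * sum_f_R0 (fun j => Rabs (u j) * Rabs (v (n - j)%nat)) n).
  { apply Rmult_le_compat_l; [pose proof (pos_INR n); lra|apply cauchy_abs_le]. }
  rewrite scal_sum.
  apply Rle_trans with (sum_f_R0 (fun j => Rabs ((INR j + 1) * u j) * K) n).
  - apply sum_Rle; intros j Hj.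
    pose proof (linear_le_mul n j Hj). specialize (Hv (n - j)%nat).
    pose proof (Rabs_pos (u j)); pose proof (Rabs_pos (v (n - j)%nat)); pose proof (pos_INR j).
    rewrite Rabs_mult, (Rabs_right (INR j + 1)) by lra.
    apply Rle_trans with ((INR j + 1) * Rabs (u j) * ((INR (n - j) + 1) * Rabs (v (n - j)%nat))).
    + replace ((INR j + 1) * Rabs (u j) * ((INR (n - j) + 1) * Rabs (v (n - j)%nat)))
        with ((INR j + 1) * (INR (n - j) + 1) * (Rabs (u j) * Rabs (v (n - j)%nat))) by ring.
      rewrite Rmult_comm. apply Rmult_le_compat_r; [nra|lra].
    + apply Rmult_le_compat_l; [nra|auto].
  - rewrite <- scal_sum, (Rmult_comm S). apply Rmult_le_compat_l; auto.
Qed.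

Lemma inv_geo_decay_cauchy u v : inv_decay u -> geo_decay v -> inv_decay (cauchy u v).
Proof.
  intros Hu Hv. destruct (geo_inv_decay_cauchy v u Hv Hu) as [K HK].
  exists K. intros n. rewrite cauchy_comm. apply HK.
Qed.

Definition delta0 (n : nat) : R := if Nat.eqb n 0 then 1 else 0.

Lemma geo_decay_delta0 : geo_decay delta0.
Proof. apply geo_decay_finite_support with 0%nat. intros [|n] Hn; [lia|reflexivity]. Qed.

Lemma geo_decay_poly_coef c m : geo_decay (poly_coef c m).
Proof.
  apply geo_decay_finite_support with m. intros [|n] Hn; [lia|]. unfold poly_coef.
  now replace (Nat.leb (S n) m) with false by (symmetry; apply Nat.leb_gt; lia).
Qed.

Lemma inv_table_stable c m n k : (k <= n)%nat -> inv_table c m n k = inv_table c m k k.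
Proof.
  induction n as [|n IH]; intros Hk.
  - now replace k with 0%nat by lia.
  - destruct (Nat.eq_dec k (S n)) as [->|Hne]; [reflexivity|].
    simpl. replace (Nat.eqb k (S n)) with false by (symmetry; apply Nat.eqb_neq; auto).
    apply IH. lia.
Qed.

Lemma inv_coef_S c m n : inv_coef c m (S n) =
  sum_f_R0 (fun j => if Nat.leb (S j) m then c (S j) * inv_coef c m (n - j)%nat else 0) n.
Proof.
  unfold inv_coef. simpl inv_table at 1. rewrite Nat.eqb_refl.
  apply sum_eq; intros j Hj. simpl Nat.leb. destruct m; [reflexivity|].
  destruct (Nat.leb j m); [|reflexivity]. f_equal. apply inv_table_stable. lia.
Qed.

Lemma cauchy_poly_coef_inv_coef c m n :
  cauchy (poly_coef c m) (inv_coef c m) n = delta0 n.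
Proof.
  unfold cauchy. destruct n as [|n]; [unfold poly_coef, inv_coef, delta0; simpl; ring|].
  rewrite decomp_sum by lia. simpl Nat.pred. rewrite Nat.sub_0_r.
  rewrite (sum_eq _
    (fun j => (if Nat.leb (S j) m then c (S j) * inv_coef c m (n - j)%nat else 0) * -1)).
  - rewrite <- scal_sum, <- inv_coef_S. unfold delta0, poly_coef; simpl. ring.
  - intros j Hj. unfold poly_coef. replace (S n - S j)%nat with (n - j)%nat by lia.
    destruct (Nat.leb (S j) m); ring.
Qed.

Lemma frac_coef_0 n : frac_coef 0 n = delta0 n.
Proof.
  induction n as [|n IH]; [reflexivity|]. simpl frac_coef. rewrite IH.
  destruct n; unfold delta0; simpl Nat.eqb; cbv iota; [simpl INR; field|unfold Rdiv; ring].
Qed.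

Lemma csum_ext c c' m z : (forall j, (1 <= j <= m)%nat -> c j = c' j) ->
  csum c m z = csum c' m z.
Proof.
  induction m as [|m IH]; intros H; simpl; [reflexivity|].
  rewrite IH by (intros; apply H; lia). rewrite H by lia. reflexivity.
Qed.

Lemma roots_outside_unit_disk_ext c c' m : (forall j, (1 <= j <= m)%nat -> c j = c' j) ->
  roots_outside_unit_disk c m -> roots_outside_unit_disk c' m.
Proof.
  intros H Hr z Hz. unfold lagpoly. rewrite <- (csum_ext c c' m z H). now apply Hr.
Qed.

Fixpoint Csum (f : nat -> C) (n : nat) : C :=
  match n with O => f O | S k => Cplus (Csum f k) (f (S k)) end.

Lemma Csum_ext_loc (f g : nat -> C) n :
  (forall i, (i <= n)%nat -> f i = g i) -> Csum f n = Csum g n.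
Proof.
  induction n as [|n IH]; intros H; simpl; [apply H; lia|].
  rewrite IH, H by (intros; try apply H; lia). reflexivity.
Qed.

Lemma Csum_ext (f g : nat -> C) n : (forall i, f i = g i) -> Csum f n = Csum g n.
Proof. intros H. apply Csum_ext_loc. auto. Qed.

Lemma Csum_minus (f g : nat -> C) n :
  Csum (fun j => Cminus (f j) (g j)) n = Cminus (Csum f n) (Csum g n).
Proof. induction n as [|n IH]; simpl; [reflexivity|]. rewrite IH. ring. Qed.

Lemma Csum_scal (a : C) (f : nat -> C) n :
  Csum (fun j => Cmult a (f j)) n = Cmult a (Csum f n).
Proof. induction n as [|n IH]; simpl; [reflexivity|]. rewrite IH. ring. Qed.

Lemma Csum_shift (f : nat -> C) n :
  Csum f (S n) = Cplus (f 0%nat) (Csum (fun j => f (S j)) n).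
Proof. induction n as [|n IH]; simpl; [reflexivity|]. simpl in IH. rewrite IH. ring. Qed.

Lemma Csum_zero_tail (f : nat -> C) n :
  (forall j, (1 <= j)%nat -> f j = 0) -> Csum f n = f 0%nat.
Proof.
  intros H; induction n as [|n IH]; simpl; [reflexivity|]. rewrite IH, (H (S n)) by lia. ring.
Qed.

(* The fundamental theorem of algebra for Coquelicot's [C], transported from MathComp's
   algebraically closed field [R[i]]. *)
Module ComplexClosed.
Import ssreflect ssrfun ssrbool eqtype ssrnat seq fintype bigop ssralg Rstruct complex.
Import GRing.Theory.
Local Open Scope ring_scope.

Definition to_Ri (c : C) : R[i] := Complex (fst c) (snd c).
Definition of_Ri (x : R[i]) : C := (Re x, Im x).

Lemma of_Ri_mul x y : of_Ri (x * y) = Cmult (of_Ri x) (of_Ri y).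
Proof. by case: x => a b; case: y => c d. Qed.

Lemma of_Ri_exp x k : of_Ri (x ^+ k) = Cpow (of_Ri x) k.
Proof. by elim: k => [|k IH] //; rewrite exprS of_Ri_mul IH. Qed.

Lemma of_Ri_sum n (f : nat -> R[i]) :
  of_Ri (\sum_(i < n.+1) f i) = Csum (fun i => of_Ri (f i)) n.
Proof.
elim: n => [|n IH]; first by rewrite big_ord1.
by rewrite big_ord_recr /= -IH; case: (\sum_(i < n.+1) f i) => a b; case: (f n.+1).
Qed.

Lemma monic_root n (P : nat -> C) :
  exists x : C, Cpow x (S n) = Csum (fun i => Cmult (P i) (Cpow x i)) n.
Proof.
have [x Hx] := @solve_monicpoly R[i] n.+1 (fun i => to_Ri (P i)) erefl.
exists (of_Ri x); rewrite -of_Ri_exp Hx (of_Ri_sum n (fun i => to_Ri (P i) * x ^+ i)).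
by apply: Csum_ext => i; rewrite of_Ri_mul of_Ri_exp; case: (P i).
Qed.
End ComplexClosed.

Definition Ccauchy (u v : nat -> C) (n : nat) : C :=
  Csum (fun j => Cmult (u j) (v (n - j)%nat)) n.

Definition peval (p : nat -> C) (m : nat) (z : C) : C :=
  Csum (fun j => Cmult (p j) (Cpow z j)) m.

Definition Cgeo_decay (u : nat -> C) : Prop :=
  exists K rho, 0 <= rho < 1 /\ forall n, Cmod (u n) <= K * rho ^ n.

(* The coefficients of (z / r) s(z) and of (1 - z / r) s(z). *)
Definition zdiv (r : C) (s : nat -> C) (n : nat) : C :=
  match n with O => 0 | S k => Cdiv (s k) r end.

Definition factor_mul (r : C) (s : nat -> C) (n : nat) : C := Cminus (s n) (zdiv r s n).

Lemma Cgeo_decay_ext u v : (forall n, u n = v n) -> Cgeo_decay v -> Cgeo_decay u.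
Proof. intros H [K [r [Hr Hb]]]. exists K, r. split; auto. intros n; rewrite H; auto. Qed.

Lemma peval_S (p : nat -> C) n z :
  peval p (S n) z = Cplus (peval p n z) (Cmult (p (S n)) (Cpow z (S n))).
Proof. reflexivity. Qed.

Lemma peval_0 (p : nat -> C) n : peval p n 0 = p 0%nat.
Proof.
  unfold peval. rewrite Csum_zero_tail; [simpl; ring|].
  intros [|j] Hj; [lia|]. simpl. ring.
Qed.

Lemma peval_root (p : nat -> C) m : p (S m) <> 0 -> exists r, peval p (S m) r = 0.
Proof.
  intros Hm.
  destruct (ComplexClosed.monic_root m (fun i => Cdiv (Copp (p i)) (p (S m)))) as [r Hr].
  exists r. rewrite peval_S, Hr. unfold peval. rewrite <- Csum_scal.
  rewrite (Csum_ext (fun j => Cmult (p (S m)) (Cmult (Cdiv (Copp (p j)) (p (S m))) (Cpow r j)))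
             (fun j => Cminus 0 (Cmult (p j) (Cpow r j)))) by (intros i; field; auto).
  rewrite Csum_minus, (Csum_zero_tail (fun _ => 0)) by reflexivity. ring.
Qed.

Lemma Ccauchy_zdiv r q s n : Ccauchy (zdiv r q) s n = Ccauchy q (zdiv r s) n.
Proof.
  unfold Ccauchy. destruct n as [|n]; [simpl; ring|].
  rewrite Csum_shift. change (Csum ?F (S n)) with (Cplus (Csum F n) (F (S n))).
  cbv beta. rewrite Nat.sub_diag. unfold zdiv at 1 4.
  rewrite Cmult_0_l, Cmult_0_r, Cplus_0_l, Cplus_0_r.
  apply Csum_ext_loc. intros j Hj.
  rewrite (Nat.sub_succ_l j n) by lia. simpl. unfold Cdiv. ring.
Qed.

Lemma Ccauchy_factor_mul r q s n :
  Ccauchy (factor_mul r q) s n = Ccauchy q (factor_mul r s) n.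
Proof.
  unfold Ccauchy, factor_mul.
  rewrite (Csum_ext _ (fun j =>
    Cminus (Cmult (q j) (s (n - j)%nat)) (Cmult (zdiv r q j) (s (n - j)%nat)))) by (intros; ring).
  rewrite (Csum_ext (fun j => Cmult (q j) _)
             (fun j => Cminus (Cmult (q j) (s (n - j)%nat)) (Cmult (q j) (zdiv r s (n - j)%nat))))
    by (intros; ring).
  rewrite !Csum_minus. f_equal. apply Ccauchy_zdiv.
Qed.

Lemma peval_factor_mul r q N z :
  peval (factor_mul r q) (S N) z = Cminus (peval q (S N) z) (Cmult (Cdiv z r) (peval q N z)).
Proof.
  induction N as [|N IH].
  - unfold peval, factor_mul; simpl. unfold Cdiv. ring.
  - rewrite peval_S, IH, (peval_S q (S N)), (peval_S q N), (Cpow_S z (S N)).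
    unfold factor_mul, zdiv, Cdiv. ring.
Qed.

Lemma Cgeo_decay_of_factor_mul r s :
  1 < Cmod r -> Cgeo_decay (factor_mul r s) -> Cgeo_decay s.
Proof.
  intros Hr [K [rho [Hrho Hb]]].
  assert (HK : 0 <= K).
  { specialize (Hb 0%nat). simpl in Hb. pose proof (Cmod_ge_0 (factor_mul r s 0%nat)). lra. }
  assert (Hr0 : r <> 0) by (intros ->; rewrite Cmod_0 in Hr; lra).
  set (r1 := / Cmod r).
  assert (Hr1 : 0 < r1 < 1).
  { unfold r1. split; [apply Rinv_0_lt_compat; lra|].
    rewrite <- Rinv_1. apply Rinv_lt_contravar; lra. }
  set (rm := Rmax rho r1).
  assert (Hrm : 0 <= rm < 1) by (unfold rm, Rmax; destruct Rle_dec; lra).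
  assert (Hrho_rm : rho <= rm) by apply Rmax_l.
  assert (Hr1_rm : r1 <= rm) by apply Rmax_r.
  (* s_(n+1) = (factor_mul r s)_(n+1) + s_n / r, and |1/r| <= rm. *)
  assert (Hlin : forall n, Cmod (s n) <= K * ((INR n + 1) * rm ^ n)).
  { induction n as [|n IH].
    - specialize (Hb 0%nat). unfold factor_mul, zdiv in Hb.
      replace (Cminus (s 0%nat) 0) with (s 0%nat) in Hb by ring. simpl in *. lra.
    - replace (s (S n)) with (Cplus (factor_mul r s (S n)) (Cdiv (s n) r))
        by (unfold factor_mul, zdiv; ring).
      eapply Rle_trans; [apply Cmod_triangle|].
      rewrite Cmod_div by auto. fold (Rdiv (Cmod (s n)) (Cmod r)). unfold Rdiv. fold r1.
      specialize (Hb (S n)).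
      assert (rho ^ S n <= rm ^ S n) by (apply pow_incr; lra).
      assert (0 <= rm ^ n) by (apply pow_le; lra).
      pose proof (pos_INR n).
      assert (Cmod (s n) * r1 <= K * ((INR n + 1) * rm ^ n) * rm).
      { apply Rmult_le_compat; auto using Cmod_ge_0; lra. }
      assert (K * rho ^ S n <= K * rm ^ S n) by (apply Rmult_le_compat_l; auto).
      rewrite S_INR. simpl pow in *. lra. }
  destruct (linear_pow_dominated rm Hrm) as [sg [K2 [Hsg [HK2 Hb2]]]].
  exists (K * K2), sg. split; auto. intros n.
  eapply Rle_trans; [apply Hlin|]. rewrite Rmult_assoc. apply Rmult_le_compat_l; auto.
Qed.

Lemma divide_by_root (p : nat -> C) m (r : C) :
  p 0%nat = 1 -> (forall j, (S m < j)%nat -> p j = 0) -> peval p (S m) r = 0 -> r <> 0 ->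
  exists q : nat -> C, q 0%nat = 1 /\ (forall j, (m < j)%nat -> q j = 0) /\
    forall j, p j = factor_mul r q j.
Proof.
  intros hp0 hpz Hroot Hr0.
  exists (fun j => Cdiv (peval p j r) (Cpow r j)).
  assert (Hstab : forall j, (S m <= j)%nat -> peval p j r = peval p (S m) r).
  { induction j as [|j IH]; intros Hj; [lia|].
    destruct (Nat.eq_dec j m) as [->|Hne]; [reflexivity|].
    rewrite peval_S, IH, hpz by lia. ring. }
  repeat split.
  - unfold peval. simpl. rewrite hp0. field.
  - intros j Hj. rewrite Hstab, Hroot by lia. field. now apply Cpow_nz.
  - intros [|j]; unfold factor_mul, zdiv.
    + unfold peval. simpl. rewrite hp0. field.
    + rewrite peval_S, Cpow_S. field. split; auto. now apply Cpow_nz.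
Qed.

Theorem Cgeo_decay_div_poly m : forall p s : nat -> C,
  p 0%nat = 1 -> (forall j, (m < j)%nat -> p j = 0) ->
  (forall z, Cmod z <= 1 -> peval p m z <> 0) ->
  Cgeo_decay (Ccauchy p s) -> Cgeo_decay s.
Proof.
  induction m as [|m IH]; intros p s hp0 hpz hroot hf.
  - refine (Cgeo_decay_ext _ _ (fun n => eq_sym _) hf).
    unfold Ccauchy. rewrite Csum_zero_tail.
    + rewrite hp0, Nat.sub_0_r. ring.
    + intros j Hj. rewrite hpz by lia. ring.
  - destruct (classic (p (S m) = 0)) as [Hz|Hnz].
    + apply (IH p); auto.
      * intros j Hj. destruct (Nat.eq_dec j (S m)) as [->|]; auto. apply hpz; lia.
      * intros z Hz' Heq. apply (hroot z Hz'). unfold peval in *. simpl. rewrite Heq, Hz. ring.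
    + destruct (peval_root p m Hnz) as [r Hpr].
      assert (Hr0 : r <> 0) by (intros ->; rewrite peval_0, hp0 in Hpr; now apply C1_nz).
      assert (Hr1 : 1 < Cmod r).
      { destruct (Rlt_le_dec 1 (Cmod r)) as [h|h]; auto. exfalso. now apply (hroot r h). }
      destruct (divide_by_root p m r hp0 hpz Hpr Hr0) as [q [Hq0 [Hqz Hpq]]].
      apply (Cgeo_decay_of_factor_mul r s Hr1).
      apply (IH q); auto.
      * intros z Hz Heq. apply (hroot z Hz).
        replace (peval p (S m) z) with (peval (factor_mul r q) (S m) z)
          by (apply Csum_ext; intros j; now rewrite Hpq).
        rewrite peval_factor_mul, peval_S, Heq, (Hqz (S m)) by lia. ring.
      * assert (Hcau : forall n, Ccauchy q (factor_mul r s) n = Ccauchy p s n).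
        { intros n. rewrite <- Ccauchy_factor_mul. apply Csum_ext. intros j. now rewrite Hpq. }
        exact (Cgeo_decay_ext _ _ Hcau hf).
Qed.

Lemma RtoC_sum_f_R0 (f : nat -> R) n : RtoC (sum_f_R0 f n) = Csum (fun j => RtoC (f j)) n.
Proof. induction n as [|n IH]; simpl; [reflexivity|]. rewrite <- IH. apply RtoC_plus. Qed.

Lemma peval_poly_coef c m z : peval (fun j => RtoC (poly_coef c m j)) m z = lagpoly c m z.
Proof.
  unfold lagpoly.
  assert (H : forall N, (N <= m)%nat ->
     peval (fun j => RtoC (poly_coef c m j)) N z = Cminus 1 (csum c N z)).
  { induction N as [|N IH]; intros HN.
    - unfold peval, poly_coef; simpl. ring.
    - rewrite peval_S, IH by lia. simpl csum. unfold poly_coef.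
      replace (Nat.leb (S N) m) with true by (symmetry; apply Nat.leb_le; lia).
      rewrite RtoC_opp. simpl Cpow. ring. }
  now apply H.
Qed.

Lemma geo_decay_div_poly_coef c m s :
  roots_outside_unit_disk c m -> geo_decay (cauchy (poly_coef c m) s) -> geo_decay s.
Proof.
  intros Hroot [K [r [Hr Hb]]].
  assert (H : Cgeo_decay (fun n => RtoC (s n))).
  { apply (Cgeo_decay_div_poly m (fun j => RtoC (poly_coef c m j))); [reflexivity| | |].
    - intros [|j] Hj; [lia|]. unfold poly_coef.
      now replace (Nat.leb (S j) m) with false by (symmetry; apply Nat.leb_gt; lia).
    - intros z Hz. rewrite peval_poly_coef. now apply Hroot.
    - exists K, r. split; auto. intros n. specialize (Hb n).
      unfold Ccauchy, cauchy in *. rewrite <- Cmod_R, RtoC_sum_f_R0 in Hb.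
      rewrite (Csum_ext _ (fun j => Cmult (RtoC (poly_coef c m j)) (RtoC (s (n - j)%nat)))) in Hb
        by (intros j; apply RtoC_mult).
      exact Hb. }
  destruct H as [K' [r' [Hr' Hb']]]. exists K', r'. split; auto. intros n.
  rewrite <- Cmod_R. apply Hb'.
Qed.

Lemma geo_decay_inv_coef c m : roots_outside_unit_disk c m -> geo_decay (inv_coef c m).
Proof.
  intros H. apply (geo_decay_div_poly_coef c m); auto.
  exact (geo_decay_ext _ _ (cauchy_poly_coef_inv_coef c m) geo_decay_delta0).
Qed.

Definition is_derive_seq (u : R -> nat -> R) (t0 : R) (u' : nat -> R) : Prop :=
  forall n, is_derive (fun t => u t n) t0 (u' n).

(* Coquelicot's generic rules state derivatives with [zero], [minus] and commutation side
   conditions; these forms over [R] are the ones [apply] can match. *)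
Lemma is_derive_Rconst (a t0 : R) : is_derive (fun _ => a) t0 0.
Proof. apply (is_derive_const a t0). Qed.

Lemma is_derive_Rminus (f g : R -> R) t0 df dg :
  is_derive f t0 df -> is_derive g t0 dg -> is_derive (fun t => f t - g t) t0 (df - dg).
Proof. intros Hf Hg. apply (is_derive_minus f g t0 df dg Hf Hg). Qed.

Lemma is_derive_Rmult (f g : R -> R) t0 df dg :
  is_derive f t0 df -> is_derive g t0 dg ->
  is_derive (fun t => f t * g t) t0 (df * g t0 + f t0 * dg).
Proof. intros Hf Hg. apply (is_derive_mult f g t0 df dg Hf Hg). intros; apply Rmult_comm. Qed.

Lemma is_derive_sum_f_R0 (f : nat -> R -> R) (d : nat -> R) t0 n :
  (forall k, (k <= n)%nat -> is_derive (f k) t0 (d k)) ->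
  is_derive (fun t => sum_f_R0 (fun k => f k t) n) t0 (sum_f_R0 d n).
Proof.
  intros H. rewrite <- sum_n_Reals.
  apply (is_derive_ext (fun t => sum_n (fun k => f k t) n) (fun t => sum_f_R0 (fun k => f k t) n));
    [intros t; apply sum_n_Reals|].
  now apply (is_derive_sum_n f).
Qed.

Lemma ex_derive_sum_f_R0 (f : nat -> R -> R) t0 n :
  (forall k, (k <= n)%nat -> ex_derive (f k) t0) ->
  ex_derive (fun t => sum_f_R0 (fun k => f k t) n) t0.
Proof.
  intros H.
  apply (ex_derive_ext (fun t => sum_n (fun k => f k t) n) (fun t => sum_f_R0 (fun k => f k t) n));
    [intros t; apply sum_n_Reals|].
  now apply (ex_derive_sum_n f).
Qed.

Lemma is_derive_seq_cauchy u u' v v' t0 :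
  is_derive_seq u t0 u' -> is_derive_seq v t0 v' ->
  is_derive_seq (fun t => cauchy (u t) (v t)) t0
    (fun n => cauchy u' (v t0) n + cauchy (u t0) v' n).
Proof.
  intros Hu Hv n. unfold cauchy. rewrite <- sum_plus.
  apply (is_derive_sum_f_R0 (fun j t => u t j * v t (n - j)%nat)).
  intros j _. apply is_derive_Rmult; [apply Hu|apply Hv].
Qed.

Definition poly_coef_deriv (c' : nat -> R) (m : nat) (n : nat) : R :=
  match n with
  | O => 0
  | S _ => if Nat.leb n m then - c' n else 0
  end.

Lemma is_derive_seq_poly_coef (c : R -> nat -> R) c' m t0 :
  (forall j, is_derive (fun t => c t j) t0 (c' j)) ->
  is_derive_seq (fun t => poly_coef (c t) m) t0 (poly_coef_deriv c' m).
Proof.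
  intros H [|n]; unfold poly_coef, poly_coef_deriv; [apply (is_derive_const 1 t0)|].
  destruct (Nat.leb (S n) m).
  - apply (is_derive_opp (fun t => c t (S n))). apply H.
  - apply (is_derive_const 0 t0).
Qed.

Lemma geo_decay_poly_coef_deriv c' m : geo_decay (poly_coef_deriv c' m).
Proof.
  apply geo_decay_finite_support with m. intros [|n] Hn; [reflexivity|]. unfold poly_coef_deriv.
  now replace (Nat.leb (S n) m) with false by (symmetry; apply Nat.leb_gt; lia).
Qed.

(* The derivative of (1 - z)^delta at delta = 0 is log (1 - z) = - sum_(n >= 1) z^n / n. *)
Definition log1m_coef (n : nat) : R :=
  match n with O => 0 | S k => - / INR (S k) end.

Lemma is_derive_seq_frac_coef (g : R -> R) (g' t0 : R) :
  g t0 = 0 -> is_derive g t0 g' ->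
  is_derive_seq (fun t => frac_coef (g t)) t0 (fun n => g' * log1m_coef n).
Proof.
  intros H0 Hg n. induction n as [|n IH].
  - simpl. rewrite Rmult_0_r. apply is_derive_Rconst.
  - simpl frac_coef. unfold Rdiv.
    assert (Hd : is_derive (fun t => frac_coef (g t) n * (INR n - g t)) t0
                  (g' * log1m_coef n * (INR n - g t0) + frac_coef (g t0) n * (0 - g'))).
    { apply (is_derive_Rmult (fun t => frac_coef (g t) n) (fun t => INR n - g t)); auto.
      apply is_derive_Rminus; [apply is_derive_Rconst|exact Hg]. }
    replace (g' * log1m_coef (S n))
      with ((g' * log1m_coef n * (INR n - g t0) + frac_coef (g t0) n * (0 - g')) * / INR (S n)).
    + exact (is_derive_scal_l _ _ _ (/ INR (S n)) Hd).
    + rewrite H0, frac_coef_0.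
      destruct n as [|n]; unfold delta0, log1m_coef; simpl Nat.eqb; cbv iota.
      * simpl INR. field.
      * rewrite !S_INR. pose proof (pos_INR n). field. lra.
Qed.

Lemma inv_decay_log1m_coef g' : inv_decay (fun n => g' * log1m_coef n).
Proof.
  exists (2 * Rabs g'). pose proof (Rabs_pos g'). intros [|n]; unfold log1m_coef.
  - rewrite Rmult_0_r, Rabs_R0, Rmult_0_r. lra.
  - pose proof (pos_INR n). rewrite S_INR.
    rewrite Rabs_mult, Rabs_Ropp, Rabs_inv, (Rabs_right (INR n + 1)) by lra.
    replace ((INR n + 1 + 1) * (Rabs g' * / (INR n + 1)))
      with (Rabs g' + Rabs g' * / (INR n + 1)) by (field; lra).
    assert (/ (INR n + 1) <= 1) by (rewrite <- Rinv_1; apply Rinv_le_contravar; lra).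
    nra.
Qed.

Lemma ex_derive_inv_coef (c : R -> nat -> R) t0 m :
  (forall j, ex_derive (fun t => c t j) t0) ->
  forall n, ex_derive (fun t => inv_coef (c t) m n) t0.
Proof.
  intros Hc N. induction N as [N IH] using lt_wf_ind.
  destruct N as [|n]; [apply (ex_derive_const 1 t0)|].
  apply (ex_derive_ext (fun t => sum_f_R0 (fun j =>
           if Nat.leb (S j) m then c t (S j) * inv_coef (c t) m (n - j)%nat else 0) n)).
  { intros t; symmetry; apply inv_coef_S. }
  apply (ex_derive_sum_f_R0 (fun j t =>
           if Nat.leb (S j) m then c t (S j) * inv_coef (c t) m (n - j)%nat else 0)).
  intros j Hj. destruct (Nat.leb (S j) m); [|apply (ex_derive_const 0 t0)].
  apply (ex_derive_mult (fun t => c t (S j)) (fun t => inv_coef (c t) m (n - j)%nat));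
    [apply Hc|apply IH; lia].
Qed.

(* Differentiating [cauchy (poly_coef c m) (inv_coef c m) = delta0] exhibits the derivative
   as the solution of a division problem by the same polynomial. *)
Lemma is_derive_seq_inv_coef (c : R -> nat -> R) c' t0 m :
  (forall j, is_derive (fun t => c t j) t0 (c' j)) -> roots_outside_unit_disk (c t0) m ->
  exists e', is_derive_seq (fun t => inv_coef (c t) m) t0 e' /\ geo_decay e'.
Proof.
  intros Hc Hroot.
  set (e' := fun n => Derive (fun t => inv_coef (c t) m n) t0).
  assert (He : is_derive_seq (fun t => inv_coef (c t) m) t0 e').
  { intros n. apply Derive_correct, ex_derive_inv_coef. intros j. eexists; apply Hc. }
  exists e'. split; auto.
  apply (geo_decay_div_poly_coef (c t0) m); auto.
  apply (geo_decay_ext _ (fun n => - cauchy (poly_coef_deriv c' m) (inv_coef (c t0) m) n)).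
  - intros n.
    pose proof (is_derive_seq_cauchy _ _ _ _ t0 (is_derive_seq_poly_coef c c' m t0 Hc) He n) as H1.
    assert (H2 : is_derive (fun t => cauchy (poly_coef (c t) m) (inv_coef (c t) m) n) t0 0).
    { apply (is_derive_ext (fun _ => delta0 n));
        [intros t; symmetry; apply cauchy_poly_coef_inv_coef|].
      apply is_derive_Rconst. }
    pose proof (eq_trans (eq_sym (is_derive_unique _ _ _ H1)) (is_derive_unique _ _ _ H2)) as E.
    simpl in E. lra.
  - apply geo_decay_opp, geo_decay_cauchy;
      [apply geo_decay_poly_coef_deriv|now apply geo_decay_inv_coef].
Qed.

Definition tame_at (u : R -> nat -> R) (t0 : R) : Prop :=
  geo_decay (u t0) /\ exists u', is_derive_seq u t0 u' /\ inv_decay u'.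

Lemma tame_at_cauchy u v t0 :
  tame_at u t0 -> tame_at v t0 -> tame_at (fun t => cauchy (u t) (v t)) t0.
Proof.
  intros [Hu [u' [Du Hu']]] [Hv [v' [Dv Hv']]]. split; [now apply geo_decay_cauchy|].
  eexists; split; [exact (is_derive_seq_cauchy u u' v v' t0 Du Dv)|].
  apply inv_decay_plus; [now apply inv_geo_decay_cauchy|now apply geo_inv_decay_cauchy].
Qed.

Lemma tame_at_geo_decay u u' t0 :
  geo_decay (u t0) -> is_derive_seq u t0 u' -> geo_decay u' -> tame_at u t0.
Proof. intros Hu Du Hu'. split; auto. exists u'. split; auto. now apply geo_decay_inv_decay. Qed.

Lemma tame_at_const w t0 : geo_decay w -> tame_at (fun _ => w) t0.
Proof.
  intros Hw. apply tame_at_geo_decay with (fun _ => 0); auto.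
  - intros n. apply is_derive_Rconst.
  - now apply geo_decay_finite_support with 0%nat.
Qed.

Lemma tame_at_poly_coef (c : R -> nat -> R) c' m t0 :
  (forall j, is_derive (fun t => c t j) t0 (c' j)) ->
  tame_at (fun t => poly_coef (c t) m) t0.
Proof.
  intros Hc. apply tame_at_geo_decay with (poly_coef_deriv c' m);
    [apply geo_decay_poly_coef|now apply is_derive_seq_poly_coef|apply geo_decay_poly_coef_deriv].
Qed.

Lemma tame_at_inv_coef (c : R -> nat -> R) c' m t0 :
  (forall j, is_derive (fun t => c t j) t0 (c' j)) -> roots_outside_unit_disk (c t0) m ->
  tame_at (fun t => inv_coef (c t) m) t0.
Proof.
  intros Hc Hroot. destruct (is_derive_seq_inv_coef c c' t0 m Hc Hroot) as [e' [De He']].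
  apply tame_at_geo_decay with e'; auto. now apply geo_decay_inv_coef.
Qed.

Lemma tame_at_frac_coef (g : R -> R) g' t0 :
  g t0 = 0 -> is_derive g t0 g' -> tame_at (fun t => frac_coef (g t)) t0.
Proof.
  intros Hg0 Hg. split.
  - rewrite Hg0. exact (geo_decay_ext _ _ frac_coef_0 geo_decay_delta0).
  - exists (fun n => g' * log1m_coef n).
    split; [now apply is_derive_seq_frac_coef|apply inv_decay_log1m_coef].
Qed.

Lemma tame_at_lambda p q a b d0 (theta : R -> nat -> R) theta' t0 :
  roots_outside_unit_disk a p ->
  roots_outside_unit_disk (fun j => theta t0 (p + j)%nat) q ->
  theta t0 (p + q + 1)%nat = d0 ->
  (forall j, is_derive (fun t => theta t j) t0 (theta' j)) ->
  tame_at (fun t => lambda p q a b d0 (theta t)) t0.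
Proof.
  intros Ha Hb Hd Dtheta. unfold lambda.
  repeat apply tame_at_cauchy.
  - exact (tame_at_inv_coef _ (fun j => theta' (p + j)%nat) q t0 (fun j => Dtheta _) Hb).
  - exact (tame_at_poly_coef _ theta' p t0 Dtheta).
  - apply (tame_at_frac_coef _ (theta' (p + q + 1)%nat - 0)); [lra|].
    apply is_derive_Rminus; [apply Dtheta|apply is_derive_Rconst].
  - now apply tame_at_const, geo_decay_inv_coef.
  - apply tame_at_const, geo_decay_poly_coef.
Qed.

Lemma tame_at_deriv_bound u t0 : tame_at u t0 ->
  exists K, forall i, (1 <= i)%nat ->
    exists l, is_derive (fun t => u t i) t0 l /\ Rabs l <= K / INR i.
Proof.
  intros [_ [u' [Du [K HK]]]]. exists K. intros i Hi. exists (u' i). split; [apply Du|].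
  assert (1 <= INR i) by (apply (le_INR 1); auto).
  specialize (HK i). pose proof (Rabs_pos (u' i)).
  apply Rle_div_r; [lra|]. nra.
Qed.

Lemma is_derive_upd (theta : nat -> R) k t0 j :
  is_derive (fun t => upd theta k t j) t0 (if Nat.eqb j k then 1 else 0).
Proof. unfold upd. destruct (Nat.eqb j k); [apply (is_derive_id t0)|apply is_derive_Rconst]. Qed.

Lemma upd_same (theta : nat -> R) k j : upd theta k (theta k) j = theta j.
Proof. unfold upd. now destruct (Nat.eqb_spec j k) as [->|]. Qed.

Lemma theta0_b p q a b d0 j : (1 <= j <= q)%nat -> theta0 p q a b d0 (p + j)%nat = b j.
Proof.
  intros Hj. unfold theta0.
  replace (Nat.leb (p + j) p) with false by (symmetry; apply Nat.leb_gt; lia).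
  replace (Nat.leb (p + j) (p + q)) with true by (symmetry; apply Nat.leb_le; lia).
  f_equal; lia.
Qed.

Lemma theta0_d p q a b d0 : theta0 p q a b d0 (p + q + 1)%nat = d0.
Proof.
  unfold theta0.
  replace (Nat.leb (p + q + 1) p) with false by (symmetry; apply Nat.leb_gt; lia).
  now replace (Nat.leb (p + q + 1) (p + q)) with false by (symmetry; apply Nat.leb_gt; lia).
Qed.

Lemma ex_uniform_bound (P : nat -> R -> Prop) N :
  (forall k C C', C <= C' -> P k C -> P k C') ->
  (forall k, (1 <= k <= N)%nat -> exists C, P k C) ->
  exists C, forall k, (1 <= k <= N)%nat -> P k C.
Proof.
  intros Hmono. induction N as [|N IH]; intros H.
  - exists 0. intros k Hk; lia.
  - destruct IH as [C1 HC1]; [intros k Hk; apply H; lia|].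
    destruct (H (S N)) as [C2 HC2]; [lia|].
    exists (Rmax C1 C2). intros k Hk.
    destruct (Nat.eq_dec k (S N)) as [->|Hne].
    + apply Hmono with C2; auto. apply Rmax_r.
    + apply Hmono with C1; [apply Rmax_l|]. apply HC1; lia.
Qed.

Theorem lemma3 (p q : nat) (a b : nat -> R) (d0 : R) :
  -1/2 < d0 < 1/2 ->
  roots_outside_unit_disk a p ->
  roots_outside_unit_disk b q ->
  no_common_factor a p b q ->
  exists K : R,
    forall i k : nat, (1 <= i)%nat -> (1 <= k <= p + q + 1)%nat ->
      exists l : R,
        is_derive (fun t : R => lambda p q a b d0 (upd (theta0 p q a b d0) k t) i)
                  (theta0 p q a b d0 k) l
        /\ Rabs l <= K / INR i.
Proof.
  intros _ Ha Hb _.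
  set (th := theta0 p q a b d0).
  destruct (ex_uniform_bound (fun k K => forall i, (1 <= i)%nat -> exists l,
      is_derive (fun t => lambda p q a b d0 (upd th k t) i) (th k) l /\ Rabs l <= K / INR i)
      (p + q + 1)) as [K HK].
  - intros k C C' HC HP i Hi. destruct (HP i Hi) as [l [Hl Hle]]. exists l. split; auto.
    assert (0 < INR i) by (apply (lt_INR 0); lia).
    apply Rle_trans with (C / INR i); auto.
    apply Rmult_le_compat_r; auto. left; now apply Rinv_0_lt_compat.
  - intros k _. apply tame_at_deriv_bound.
    apply (tame_at_lambda p q a b d0 (upd th k) (fun j => if Nat.eqb j k then 1 else 0)); auto.
    + apply (roots_outside_unit_disk_ext b); auto.
      intros j Hj. unfold th. now rewrite upd_same, theta0_b.
    + unfold th. now rewrite upd_same, theta0_d.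
    + intros j. apply is_derive_upd.
  - exists K. intros i k Hi Hk. now apply HK.
Qed.
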